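(* Let $\odot$ be a non-degenerate pseudo-multiplication on $[0,\infty]$ with left identity $1_{\odot}$. For $t\in[0,\infty]$ the following conditions are equivalent: (1) $t$ is $\odot$-finite; (2) $s\odot t$ is $\odot$-finite for some $s>0$; (3) $s\odot t\leqslant 1_{\odot}$ for some $s>0$; (4) $t\odot s'\leqslant 1_{\odot}$ for some $s'>0$; (5) $t\odot s'$ is $\odot$-finite for some $s'>0$.
   Context: A pseudo-multiplication is a binary operation $\odot:[0,\infty]\times[0,\infty]\to[0,\infty]$ such that: $\odot$ is associative; $\odot$ is continuous on $(0,\infty)\times[0,\infty]$; for every $t$, the map $s\mapsto s\odot t$ is continuous on $(0,\infty]$; $\odot$ is nondecreasing in each argument; there is a left identity element $1_{\odot}$, i.e. $1_{\odot}\odot t=t$ for all $t$; there are no zero divisors, i.e. $s\odot t=0$ implies $s=0$ or $t=0$; and $0$ is an annihilator, i.e. $0\odot t=t\odot 0=0$ for all $t$. For $t\in[0,\infty]$ put $O(t)=\inf_{s>0} s\odot t$. An element $t$ is called $\odot$-finite if $O(t)=0$, and $\odot$-infinite otherwise. The pseudo-multiplication $\odot$ is called non-degenerate if $O(1_{\odot})=0$. *)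

(* [0,oo] is modelled inside the extended reals \bar R. *)
From HB Require Import structures.
From mathcomp Require Import all_boot all_order all_algebra.
From mathcomp Require Import all_classical all_reals all_analysis.
Set Implicit Arguments. Unset Strict Implicit. Unset Printing Implicit Defensive.
Import Order.TTheory GRing.Theory Num.Theory.
Local Open Scope classical_set_scope.
Local Open Scope ereal_scope.

Section PseudoMult.
Context {R : realType}.

Definition nnE : set (\bar R) := [set x | 0 <= x].

Record is_pseudo_mult (op : \bar R -> \bar R -> \bar R) (e : \bar R) : Prop := {
  pm_ge0 : forall s t, 0 <= s -> 0 <= t -> 0 <= op s t;
  pm_assoc : forall s t u, 0 <= s -> 0 <= t -> 0 <= u -> op (op s t) u = op s (op t u);
  pm_cont : {within [set p : \bar R * \bar R | (0 < p.1 < +oo) && (0 <= p.2)],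
               continuous (fun p : \bar R * \bar R => op p.1 p.2)};
  pm_cont_l : forall t, 0 <= t ->
     {within [set s : \bar R | 0 < s], continuous (fun s => op s t)};
  pm_monol : forall s s' t, 0 <= s -> s <= s' -> 0 <= t -> op s t <= op s' t;
  pm_monor : forall s t t', 0 <= s -> 0 <= t -> t <= t' -> op s t <= op s t';
  pm_e_ge0 : 0 <= e;
  pm_lid : forall t, 0 <= t -> op e t = t;
  pm_nozd : forall s t, 0 <= s -> 0 <= t -> op s t = 0 -> s = 0 \/ t = 0;
  pm_0l : forall t, 0 <= t -> op 0 t = 0;
  pm_0r : forall t, 0 <= t -> op t 0 = 0 }.

Definition Oinf (op : \bar R -> \bar R -> \bar R) (t : \bar R) : \bar R :=
  ereal_inf [set op s t | s in [set s : \bar R | 0 < s]].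

Definition pm_finite op (t : \bar R) : Prop := Oinf op t = 0.

Definition pm_nondegenerate op (e : \bar R) : Prop := Oinf op e = 0.

End PseudoMult.

From HB Require Import structures.
From mathcomp Require Import all_boot all_order all_algebra.
From mathcomp Require Import all_classical all_reals all_analysis.
Import Order.TTheory GRing.Theory Num.Theory.
Local Open Scope ereal_scope.

(* O is monotone and absorbs left factors, [O t <= O (s (.) t)], and right
   factors, [O t (.) s <= O (t (.) s)]; with no zero divisors the latter
   also gives back [O t = 0].  Non-degeneracy makes every element below
   [1_(.)] finite.  The only analytic step is (1) -> (4): if [s (.) t] is a
   finite positive value [c], joint continuity at [(c, 0)] gives [y > 0] with
   [s (.) (t (.) y) = c (.) y < s (.) 1_(.)], and right monotonicity then
   forces [t (.) y <= 1_(.)]. *)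

Section PseudoMultFinite.
Context {R : realType} {op : \bar R -> \bar R -> \bar R} {e : \bar R}.
Context (Hpm : is_pseudo_mult op e).
Local Open Scope classical_set_scope.

Lemma pm_unit_gt0 : 0 < e.
Proof.
rewrite lt_def (pm_e_ge0 Hpm) andbT; apply/eqP => e0.
have := pm_lid Hpm (lee01 : (0 : \bar R) <= 1).
by rewrite e0 (pm_0l Hpm) ?lee01 // => /eqP; rewrite eqe eq_sym oner_eq0.
Qed.

Lemma pm_gt0 {s t} : 0 < s -> 0 < t -> 0 < op s t.
Proof.
move=> s0 t0; rewrite lt_def (pm_ge0 Hpm) ?ltW // andbT; apply/eqP => st0.
by case: (pm_nozd Hpm (ltW s0) (ltW t0) st0) => x0; [move: s0|move: t0];
  rewrite x0 ltxx.
Qed.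

Lemma Oinf_ge0 {t} : 0 <= t -> 0 <= Oinf op t.
Proof. by move=> t0; apply/ereal_infP => _ [s s0 <-]; apply: (pm_ge0 Hpm) => //; exact: ltW. Qed.

Lemma Oinf_le_op t {s} : 0 < s -> Oinf op t <= op s t.
Proof. by move=> s0; apply: ereal_inf_lbound; exists s. Qed.

Lemma le_Oinf {a b} : 0 <= a -> a <= b -> Oinf op a <= Oinf op b.
Proof.
move=> a0 ab; apply/ereal_infP => _ [s s0 <-].
apply: le_trans (Oinf_le_op a s0) _.
by apply: (pm_monor Hpm) => //; exact: ltW.
Qed.

Lemma Oinf_le_opl {s t} : 0 < s -> 0 <= t -> Oinf op t <= Oinf op (op s t).
Proof.
move=> s0 t0; apply/ereal_infP => _ [r r0 <-].
rewrite -(pm_assoc Hpm) ?(ltW r0) ?(ltW s0) //.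
by apply: Oinf_le_op; exact: pm_gt0.
Qed.

Lemma Oinf_opr_le {s t} : 0 < s -> 0 <= t -> op (Oinf op t) s <= Oinf op (op t s).
Proof.
move=> s0 t0; apply/ereal_infP => _ [r r0 <-].
rewrite -(pm_assoc Hpm) ?(ltW r0) ?(ltW s0) //.
by apply: (pm_monol Hpm); [exact: Oinf_ge0|exact: Oinf_le_op|exact: ltW].
Qed.

Lemma pm_finiteP {t} : 0 <= t -> Oinf op t <= 0 -> pm_finite op t.
Proof. by move=> t0 Ot; apply/eqP; rewrite eq_le Ot Oinf_ge0. Qed.

Lemma pm_finite_le {a b} : 0 <= a -> a <= b -> pm_finite op b -> pm_finite op a.
Proof. by move=> a0 ab fin_b; apply: pm_finiteP => //; rewrite -fin_b le_Oinf. Qed.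

Lemma pm_finite_opl {s t} : 0 < s -> 0 <= t ->
  pm_finite op (op s t) -> pm_finite op t.
Proof. by move=> s0 t0 fin_st; apply: pm_finiteP => //; rewrite -fin_st Oinf_le_opl. Qed.

Lemma pm_finite_opr {s t} : 0 < s -> 0 <= t ->
  pm_finite op (op t s) -> pm_finite op t.
Proof.
move=> s0 t0 fin_ts; have O0 : op (Oinf op t) s = 0.
  apply/eqP; rewrite eq_le (pm_ge0 Hpm) ?Oinf_ge0 ?(ltW s0) // andbT.
  by rewrite -[X in _ <= X]fin_ts Oinf_opr_le.
by case: (pm_nozd Hpm (Oinf_ge0 t0) (ltW s0) O0) => // s_eq0; move: s0;
  rewrite s_eq0 ltxx.
Qed.

Lemma pm_finite_ltl {t x} : pm_finite op t -> 0 < x ->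
  exists2 s, 0 < s & op s t < x.
Proof.
move=> fin_t x0; have : Oinf op t < x by rewrite fin_t.
by move/ereal_inf_lt => [_ [s s0 <-] st_x]; exists s.
Qed.

Lemma pm_opr_lt {c x} : 0 < c -> c < +oo -> 0 < x ->
  exists2 y, 0 < y & op c y < x.
Proof.
move=> c0 cfin x0.
have [d d0 dx] : exists2 d : R, (0 < d)%R & d%:E <= x.
  by case: x x0 => [r||] //= r0; [exists r|exists 1%R; rewrite ?leey].
pose A := [set p : \bar R * \bar R | (0 < p.1 < +oo) && (0 <= p.2)].
have yA n : A (c, (harmonic n : R)%:E) by rewrite /A /= c0 cfin lee_fin harmonic_ge0.
have y_cvg : (c, (harmonic n : R)%:E) @[n --> \oo] --> ((c, 0) : subspace A).
  apply/subspace_cvgP; first by rewrite /A /= c0 cfin /=.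
  have y_cvg : (c, (harmonic n : R)%:E) @[n --> \oo] --> (c, 0).
    exact: (cvg_pair (cvg_cst c) cvge_harmonic).
  by move=> P /= /y_cvg [N _ PN]; exists N => // n /PN; apply; exact: yA.
have opc_cvg := cvg_comp _ _ y_cvg (@pm_cont _ _ _ Hpm (c, 0)).
have lt_d : nbhs (from_subspace A (fun p => op p.1 p.2) (c, 0)) [set z | z < d%:E].
  rewrite /from_subspace /= (pm_0r Hpm) ?ltW //.
  exact: (@nbhs_open_ereal_lt R 0%R (fun=> d)).
have [N _ opcN] := opc_cvg _ lt_d.
exists (harmonic N : R)%:E; first by rewrite lte_fin harmonic_gt0.
exact: lt_le_trans (opcN N (leqnn N)) dx.
Qed.

Lemma pm_finite_ler {t x} : 0 <= t -> 0 < x -> pm_finite op t ->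
  exists2 y, 0 < y & op t y <= x.
Proof.
move=> t0 x_gt0 fin_t; have [->|t_neq0] := eqVneq t 0.
  by exists 1; rewrite ?lte01 // (pm_0l Hpm) ?lee01 // ltW.
have t_gt0 : 0 < t by rewrite lt_def t_neq0.
have [s s0 st_lt1] := pm_finite_ltl fin_t (lte01 : (0 : \bar R) < 1).
have st_fin : op s t < +oo by apply: lt_trans st_lt1 (ltry 1%R).
have [y y0 sty_lt] := pm_opr_lt (pm_gt0 s0 t_gt0) st_fin (pm_gt0 s0 x_gt0).
exists y => //; rewrite leNgt; apply/negP => x_lt.
have : op s x <= op s (op t y).
  by apply: (pm_monor Hpm); [exact: ltW|exact: ltW|exact: ltW].
by rewrite -(pm_assoc Hpm) ?(ltW s0) ?(ltW y0) // leNgt sty_lt.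
Qed.

End PseudoMultFinite.

Theorem proposition2p4 (R : realType) (op : \bar R -> \bar R -> \bar R) (e : \bar R)
  (Hpm : is_pseudo_mult op e) (Hnd : pm_nondegenerate op e)
  (t : \bar R) (ht : 0 <= t) :
  [<-> pm_finite op t;
       exists2 s, 0 < s & pm_finite op (op s t);
       exists2 s, 0 < s & op s t <= e;
       exists2 s', 0 < s' & op t s' <= e;
       exists2 s', 0 < s' & pm_finite op (op t s')].
Proof.
have e_gt0 := pm_unit_gt0 Hpm.
have op_ge0 s : 0 < s -> 0 <= op s t /\ 0 <= op t s.
  by move=> /ltW s0; split; apply: (pm_ge0 Hpm).
tfae.
- by move=> fin_t; exists e; rewrite ?(pm_lid Hpm).
- move=> [s s0 fin_st]; have [r r0 rst_lt] := pm_finite_ltl fin_st e_gt0.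
  exists (op r s); first exact: (pm_gt0 Hpm).
  by rewrite (pm_assoc Hpm) ?(ltW r0) ?(ltW s0) //; exact: ltW.
- move=> [s s0 st_le]; apply: (pm_finite_ler Hpm ht e_gt0).
  apply: (pm_finite_opl Hpm s0 ht); apply: (pm_finite_le Hpm _ st_le Hnd).
  exact: (op_ge0 _ s0).1.
- move=> [s s0 ts_le]; exists s => //; apply: (pm_finite_le Hpm _ ts_le Hnd).
  exact: (op_ge0 _ s0).2.
- by move=> [s s0 fin_ts]; exact: (pm_finite_opr Hpm s0 ht fin_ts).
Qed.
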